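(* Let $\Gamma=\{1,\gamma\}=\mathrm{Gal}(\mathbb C/\mathbb R)$. Let $H$ be a connected reductive complex algebraic group (identified with its $\mathbb C$-points) and $1\to H\to E\xrightarrow{\pi}\Gamma\to1$ an extension of abstract groups such that every element of $E_\gamma=\pi^{-1}(\gamma)$ acts on $H$ by conjugation via an anti-regular automorphism. Fix a pinning $(T,B,\{X_\alpha\})$ of $H$ and let $x'\in E_\gamma$ be such that $\tau_H:=\mathrm{inn}(x')|_H$ preserves the pinning; then $h':=(x')^2\in C:=Z(H)$ and $\mathbf H=(H,\tau_H)$ is a real algebraic group with center $\mathbf C=(C,\tau_H|_C)$, and $h'\in Z^2\mathbf C$. Let $\Delta\colon H^1(\mathbf H/\mathbf C)\to H^2\mathbf C$ be the connecting map of the exact sequence $1\to\mathbf C\to\mathbf H\to\mathbf H/\mathbf C\to1$. Then the following are equivalent: (i) there exists $x\in E_\gamma$ with $x^2=1$; (ii) $(h')^{-1}=b\,\tau_H(b)$ for some $b\in H$; (iii) $[(h')^{-1}]\in\mathrm{im}\,\Delta$.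
   Context: Anti-regular map of complex affine varieties: $\varphi$ such that $x\mapsto\overline{f(\varphi(x))}$ is regular for every regular $f$. A real algebraic group is a pair $(G,\tau)$, $\tau$ an anti-regular involutive automorphism of the complex linear algebraic group $G$. A pinning of $H$: a maximal torus $T$, a Borel subgroup $B\supset T$, and nonzero $X_\alpha$ in the root space of each simple root $\alpha$. For a real group $\mathbf G=(G,\tau)$: $Z^1\mathbf G=\{z\in G: z\tau(z)=1\}$, $z\sim b^{-1}z\tau(b)$, $H^1\mathbf G=Z^1\mathbf G/\sim$. For commutative $\mathbf A=(A,\tau)$: $Z^2\mathbf A=A^\tau$, $B^2\mathbf A=\{a\tau(a)\}$, $H^2\mathbf A=Z^2\mathbf A/B^2\mathbf A$. The connecting map sends the class of $z\in Z^1(\mathbf H/\mathbf C)$ to the class of $\tilde z\tau_H(\tilde z)\in Z^2\mathbf C$ for any lift $\tilde z\in H$ of $z$. *)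

Record grp := Grp {
  carrier :> Type;
  gmul : carrier -> carrier -> carrier;
  gone : carrier;
  ginv : carrier -> carrier;
  gmulA : forall x y z, gmul x (gmul y z) = gmul (gmul x y) z;
  gmul1l : forall x, gmul gone x = x;
  gmul1r : forall x, gmul x gone = x;
  gmulVl : forall x, gmul (ginv x) x = gone;
  gmulVr : forall x, gmul x (ginv x) = gone
}.

Arguments gmul {g}.
Arguments gone {g}.
Arguments ginv {g}.

(* Gamma = Gal(C/R) = {1, gamma} is modelled by bool: false = 1, true = gamma,
   with group law xorb.  An extension 1 -> H -> E -> Gamma -> 1 is given by a
   surjective homomorphism pi : E -> bool; H is identified with ker pi. *)
Definition is_extension (E : grp) (pi : E -> bool) : Prop :=
  (forall x y : E, pi (gmul x y) = xorb (pi x) (pi y)) /\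
  (exists x : E, pi x = true).

Definition inH (E : grp) (pi : E -> bool) (h : E) : Prop := pi h = false.

Definition inEgamma (E : grp) (pi : E -> bool) (x : E) : Prop := pi x = true.

Definition inC (E : grp) (pi : E -> bool) (c : E) : Prop :=
  inH E pi c /\ forall h : E, inH E pi h -> gmul c h = gmul h c.

Definition tauH (E : grp) (x' : E) (h : E) : E := gmul (gmul x' h) (ginv x').

(* Z^2 C = C^tau. *)
Definition inZ2C (E : grp) (pi : E -> bool) (x' : E) (c : E) : Prop :=
  inC E pi c /\ tauH E x' c = c.

(* B^2 C = { c tau(c) : c in C }. *)
Definition inB2C (E : grp) (pi : E -> bool) (x' : E) (a : E) : Prop :=
  exists c : E, inC E pi c /\ a = gmul c (tauH E x' c).

(* Equality of classes in H^2 C = Z^2 C / B^2 C (C is commutative). *)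
Definition H2C_eq (E : grp) (pi : E -> bool) (x' : E) (a a' : E) : Prop :=
  inZ2C E pi x' a /\ inZ2C E pi x' a' /\
  inB2C E pi x' (gmul a (ginv a')).

(* Z^1 (H/C): an element of H/C is a coset zC (z in H, a lift); the cocycle
   condition (zC) tau(zC) = 1 in H/C reads z tau(z) in C. *)
Definition liftZ1_quot (E : grp) (pi : E -> bool) (x' : E) (z : E) : Prop :=
  inH E pi z /\ inC E pi (gmul z (tauH E x' z)).

(* The class a (an element of Z^2 C) lies in the image of the connecting map
   Delta : H^1(H/C) -> H^2 C, which sends the class of zC in Z^1(H/C) to the
   class of z~ tau(z~) for any lift z~ in H. *)
Definition in_im_Delta (E : grp) (pi : E -> bool) (x' : E) (a : E) : Prop :=
  exists z : E, liftZ1_quot E pi x' z /\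
    H2C_eq E pi x' a (gmul z (tauH E x' z)).


(* Every element of E_gamma is b x' with b in H, and (b x')^2 = b tau(b) h'.
   Hence an involution in E_gamma is exactly a b in H with b tau(b) = h'^-1,
   which gives (i) <-> (ii).  For (ii) <-> (iii): a class [a] of Z^2 C lies in
   the image of Delta iff a = z tau(z) c tau(c) for some z in H with z tau(z)
   central and some c in C; since tau(c) is again central, this is
   (c z) tau(c z), so im Delta consists of the classes of norms b tau(b). *)

Section GroupFacts.
Variable G : grp.
Local Infix "*" := gmul.
Local Notation "x ^-1" := (ginv x) (at level 3, left associativity, format "x ^-1").

Lemma mulKg (x y : G) : x^-1 * (x * y) = y.
Proof. rewrite gmulA, gmulVl, gmul1l; reflexivity. Qed.

Lemma mulKVg (x y : G) : x * (x^-1 * y) = y.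
Proof. rewrite gmulA, gmulVr, gmul1l; reflexivity. Qed.

Lemma invg_unique (x y : G) : x * y = gone -> x^-1 = y.
Proof. intro Hxy. rewrite <- (gmul1r _ x^-1), <- Hxy, mulKg. reflexivity. Qed.

Lemma invMg (x y : G) : (x * y)^-1 = y^-1 * x^-1.
Proof. apply invg_unique. rewrite <- gmulA, mulKVg, gmulVr. reflexivity. Qed.

Lemma invgK (x : G) : x^-1^-1 = x.
Proof. apply invg_unique, gmulVl. Qed.

Lemma invg1 : (@gone G)^-1 = gone.
Proof. apply invg_unique, gmul1l. Qed.

Lemma mulg_eq1 (x y : G) : x * y = gone <-> y^-1 = x.
Proof.
  split; intro Hxy.
  - rewrite <- (invgK x). f_equal. symmetry. apply invg_unique, Hxy.
  - rewrite <- Hxy. apply gmulVl.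
Qed.

Lemma commuteV (c h : G) : c * h = h * c -> c^-1 * h = h * c^-1.
Proof.
  intro Hch. transitivity (c^-1 * ((h * c) * c^-1)).
  - rewrite <- gmulA, gmulVr, gmul1r. reflexivity.
  - rewrite <- Hch, <- gmulA, mulKg. reflexivity.
Qed.

End GroupFacts.

Ltac gnorm :=
  repeat progress (rewrite ?invMg, ?invgK, ?invg1, ?gmul1l, ?gmul1r,
                     ?gmulVl, ?gmulVr, ?mulKVg, ?mulKg; rewrite <- ?gmulA).

Section Extension.
Variables (G : grp) (pi : G -> bool).
Local Infix "*" := gmul.
Local Notation "x ^-1" := (ginv x) (at level 3, left associativity, format "x ^-1").
Hypothesis pi_morph : forall x y : G, pi (x * y) = xorb (pi x) (pi y).

Lemma pi1 : pi gone = false.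
Proof.
  pose proof (pi_morph gone gone) as H11. rewrite gmul1l in H11.
  destruct (pi gone); simpl in H11; congruence.
Qed.

Lemma piV (x : G) : pi x^-1 = pi x.
Proof.
  pose proof (pi_morph x^-1 x) as Hx. rewrite gmulVl, pi1 in Hx.
  destruct (pi x), (pi x^-1); simpl in Hx; congruence.
Qed.

Lemma pi_tauH (x h : G) : pi (tauH G x h) = pi h.
Proof. unfold tauH. rewrite !pi_morph, piV. destruct (pi x), (pi h); reflexivity. Qed.

Lemma inC1 : inC G pi gone.
Proof. split; [apply pi1 | intros h _; rewrite gmul1l, gmul1r; reflexivity]. Qed.

Lemma inC_invg (c : G) : inC G pi c -> inC G pi c^-1.
Proof.
  intros [Hc Hcc]. split.
  - unfold inH. rewrite piV. exact Hc.
  - intros h Hh. apply commuteV, Hcc, Hh.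
Qed.

Section Twist.
Variable x' : G.
Local Notation tau := (tauH G x').

Lemma tauH1 : tau gone = gone.
Proof. unfold tauH. gnorm. reflexivity. Qed.

Lemma tauHM (a b : G) : tau (a * b) = tau a * tau b.
Proof. unfold tauH. gnorm. reflexivity. Qed.

Lemma tauHV (a : G) : tau a^-1 = (tau a)^-1.
Proof. unfold tauH. gnorm. reflexivity. Qed.

Lemma tauH_square : tau (x' * x') = x' * x'.
Proof. unfold tauH. gnorm. reflexivity. Qed.

Lemma inC_tauH (c : G) : inC G pi c -> inC G pi (tau c).
Proof.
  intros [Hc Hcc]. split.
  - unfold inH. rewrite pi_tauH. exact Hc.
  - intros h Hh.
    assert (Hh' : inH G pi (tauH G x'^-1 h)) by (unfold inH; rewrite pi_tauH; exact Hh).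
    pose proof (Hcc _ Hh') as Hcomm. unfold tauH in *. rewrite invgK in Hcomm.
    transitivity (x' * ((c * (x'^-1 * h * x')) * x'^-1)); [gnorm; reflexivity |].
    rewrite Hcomm. gnorm. reflexivity.
Qed.

Lemma inZ2C_inv_square : inC G pi (x' * x') -> inZ2C G pi x' (x' * x')^-1.
Proof. intro Hh'. split; [apply inC_invg, Hh' | rewrite tauHV, tauH_square; reflexivity]. Qed.

Lemma mul_tauH_square (b : G) : (b * x') * (b * x') = b * tau b * (x' * x').
Proof. unfold tauH. gnorm. reflexivity. Qed.

Lemma square_eq1_iff (b : G) :
  (b * x') * (b * x') = gone <-> (x' * x')^-1 = b * tau b.
Proof. rewrite mul_tauH_square. apply mulg_eq1. Qed.

Lemma Egamma_involution_iff :
  inEgamma G pi x' ->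
  (exists x, inEgamma G pi x /\ x * x = gone) <->
  (exists b, inH G pi b /\ (x' * x')^-1 = b * tau b).
Proof.
  unfold inEgamma, inH. intro Hx'. split.
  - intros [x [Hx Hxx]]. exists (x * x'^-1). split.
    + rewrite pi_morph, piV, Hx, Hx'. reflexivity.
    + apply square_eq1_iff. rewrite <- (gmulA _ x), gmulVl, gmul1r. exact Hxx.
  - intros [b [Hb Hbb]]. exists (b * x'). split.
    + rewrite pi_morph, Hb, Hx'. reflexivity.
    + apply square_eq1_iff, Hbb.
Qed.

Lemma in_im_Delta_iff_norm (a : G) :
  inZ2C G pi x' a ->
  (exists b, inH G pi b /\ a = b * tau b) <-> in_im_Delta G pi x' a.
Proof.
  intro Ha. split.
  - intros [b [Hb ->]]. exists b.
    split; [split; [exact Hb | exact (proj1 Ha)] |].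
    split; [exact Ha | split; [exact Ha |]].
    exists gone. split; [apply inC1 |]. rewrite tauH1, gmulVr, gmul1l. reflexivity.
  - intros [z [[Hz Hzz] [_ [_ [c [Hc Hcc]]]]]].
    exists (c * z). split.
    + unfold inH. rewrite pi_morph, (proj1 Hc), Hz. reflexivity.
    + assert (Htc_z : tau c * z = z * tau c) by (apply (inC_tauH c Hc), Hz).
      transitivity ((a * (z * tau z)^-1) * (z * tau z)); [gnorm; reflexivity |].
      rewrite Hcc, tauHM. gnorm. rewrite (gmulA _ (tau c) z), Htc_z. gnorm. reflexivity.
Qed.

End Twist.
End Extension.

Theorem corollary7p6 (E : grp) (pi : E -> bool) (x' : E)
  (Hext : is_extension E pi)
  (Hx' : inEgamma E pi x')
  (Hh' : inC E pi (gmul x' x')) :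
  let h' := gmul x' x' in
  ((exists x : E, inEgamma E pi x /\ gmul x x = gone) <->
   (exists b : E, inH E pi b /\ ginv h' = gmul b (tauH E x' b))) /\
  ((exists b : E, inH E pi b /\ ginv h' = gmul b (tauH E x' b)) <->
   in_im_Delta E pi x' (ginv h')).
Proof.
  destruct Hext as [pi_morph _]. intro h'. split.
  - exact (Egamma_involution_iff E pi pi_morph x' Hx').
  - exact (in_im_Delta_iff_norm E pi pi_morph x' _ (inZ2C_inv_square E pi pi_morph x' Hh')).
Qed.
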